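(* Let $X$ be a Banach space and let $x\in S_X$ be a super $\Delta$-point. Then every relatively weakly open subset $W$ of $B_X$ containing $x$ has Kuratowski measure of non-compactness $\alpha(W)=2$. More precisely, for every such $W$ and every $\varepsilon>0$ there is a sequence $(x_n)\subseteq W$ with $\|x_i-x_j\|>2-\varepsilon$ for all $i\neq j$.
   Context: The Kuratowski measure of non-compactness $\alpha(A)$ of a non-empty bounded subset $A$ of a metric space is the infimum of all $\varepsilon>0$ such that $A$ can be covered by finitely many sets of diameter at most $\varepsilon$. An element $x\in S_X$ is a super $\Delta$-point if $\sup_{y\in V}\|x-y\|=2$ for every relatively weakly open subset $V$ of $B_X$ containing $x$. *)

From HB Require Import structures.
From mathcomp Require Import all_boot all_order all_algebra.
From mathcomp Require Import all_classical all_reals all_analysis.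
Set Implicit Arguments. Unset Strict Implicit. Unset Printing Implicit Defensive.
Import Order.TTheory GRing.Theory Num.Theory.
Import numFieldNormedType.Exports.
Local Open Scope classical_set_scope.
Local Open Scope ring_scope.

Section Defs.
Context {R : realType} {V : normedModType R}.

Definition unit_ball : set V := [set y | Num.norm y <= 1].
Definition unit_sphere : set V := [set y | Num.norm y = 1].

Definition weakly_open (U : set V) : Prop :=
  forall x, U x -> exists (n : nat) (f : 'I_n -> {linear V -> R^o}) (d : R),
    (forall i, continuous (f i)) /\ 0 < d /\
    [set y | forall i, `|f i (y - x)| < d] `<=` U.

Definition rel_weakly_open_ball (W : set V) : Prop :=
  exists U, weakly_open U /\ W = U `&` unit_ball.

Definition super_Delta_point (x : V) : Prop :=
  unit_sphere x /\
  forall W, rel_weakly_open_ball W -> W x ->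
    sup [set `|x - y| | y in W] = 2.

Definition diam_le (S : set V) (e : R) : Prop :=
  forall y z, S y -> S z -> `|y - z| <= e.

Definition finitely_coverable (A : set V) (e : R) : Prop :=
  exists (n : nat) (S : 'I_n -> set V),
    (forall i, diam_le (S i) e) /\ A `<=` \bigcup_(i in [set: 'I_n]) S i.

Definition kuratowski (A : set V) : R :=
  inf [set e : R | 0 < e /\ finitely_coverable A e].

End Defs.

From HB Require Import structures.
From mathcomp Require Import all_boot all_order all_algebra.
From mathcomp Require Import all_classical all_reals all_analysis.
From mathcomp Require Import lra.
Import Order.TTheory GRing.Theory Num.Theory.
Import numFieldNormedType.Exports.
Local Open Scope classical_set_scope.
Local Open Scope ring_scope.

(* Given a relatively weakly open W containing the super Delta-point x and
   d > 0, pick y in W with |x - y| > 2 - d and a norm-one functional f norming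
   x - y (Hahn-Banach), so f x - f y > 2 - d.  The slice W /\ {f > 1 - d} is
   again relatively weakly open and still contains x, because f y >= -1.
   Iterating inside the successive slices yields points y_k such that y_j lies
   in the k-th slice for j > k, whence f_k (y_j - y_k) > 2 - 2d.  A sequence
   in W that is (2 - e)-separated for every e > 0 forbids finite covers by
   sets of diameter < 2, while W, being inside the unit ball, has diameter at
   most 2. *)

Section HahnBanach.
Context {R : realType} {V : normedModType R}.

(* Partial linear functionals on subspaces of V are handled through their graphs,
   which makes the chains of Zorn's lemma simple unions. *)
Definition linear_graph (G : set (V * R)) : Prop :=
  [/\ G (0, 0), (forall a b, G a -> G b -> G (a.1 + b.1, a.2 + b.2)),
      (forall (t : R) a, G a -> G (t *: a.1, t * a.2)) &
      (forall a b, G a -> G b -> a.1 = b.1 -> a.2 = b.2)].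

Definition norm_dominated (G : set (V * R)) : Prop :=
  forall a, G a -> a.2 <= `|a.1|.

Definition norming_graph (y0 : V) (G : set (V * R)) : Prop :=
  [/\ linear_graph G, norm_dominated G & G (y0, `|y0|)].

Definition graph_extension (G : set (V * R)) (z : V) (c : R) : set (V * R) :=
  [set p | exists a t, G a /\ p = (a.1 + t *: z, a.2 + t * c)].

Lemma graph_extension_sub G z c : G `<=` graph_extension G z c.
Proof.
by move=> [v r] Gp; exists (v, r), 0; rewrite scale0r mul0r !addr0.
Qed.

Lemma linear_graph_extension G z c : linear_graph G -> (forall r, ~ G (z, r)) ->
  linear_graph (graph_extension G z c).
Proof.
move=> [G0 GD GZ Gf] Gz; split.
- exact: graph_extension_sub.
- move=> _ _ [a [t [Ga ->]]] [b [s [Gb ->]]].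
  exists (a.1 + b.1, a.2 + b.2), (t + s); split; first exact: GD.
  by rewrite /= scalerDl mulrDl; congr pair; rewrite addrACA.
- move=> u _ [a [t [Ga ->]]].
  exists (u *: a.1, u * a.2), (u * t); split; first exact: GZ.
  by rewrite /= scalerDr mulrDr scalerA mulrA.
- move=> _ _ [a [t [Ga ->]]] [b [s [Gb ->]]] /= Eab.
  have [ts|ts] := eqVneq t s.
    by subst s; rewrite (Gf _ _ Ga Gb (addIr _ Eab)).
  have zE : z = (t - s)^-1 *: (b.1 + -1 *: a.1).
    have -> : b.1 + -1 *: a.1 = (t - s) *: z.
      have -> : b.1 = a.1 + t *: z - s *: z by rewrite Eab addrK.
      by rewrite scaleN1r scalerBl addrAC [a.1 + _ - _]addrAC subrr add0r.
    by rewrite scalerA mulVf ?scale1r // subr_eq0.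
  case: (Gz ((t - s)^-1 * (b.2 + -1 * a.2))); rewrite zE.
  exact: (GZ _ _ (GD _ _ Gb (GZ (-1) _ Ga))).
Qed.

Lemma extension_constant G z : linear_graph G -> norm_dominated G ->
  exists c, forall a, G a -> a.2 - `|a.1 - z| <= c /\ c <= `|a.1 + z| - a.2.
Proof.
move=> [G0 GD _ _] Gb.
pose E := [set a.2 - `|a.1 - z| | a in G].
have Eub b : G b -> ubound E (`|b.1 + z| - b.2).
  move=> Gb' _ [a Ga <-].
  (* a.2 + b.2 <= |a.1 + b.1| <= |a.1 - z| + |b.1 + z| *)
  have := Gb _ (GD _ _ Ga Gb'); rewrite /= => Hab.
  have : `|a.1 + b.1| <= `|a.1 - z| + `|b.1 + z|.
    have -> : a.1 + b.1 = (a.1 - z) + (b.1 + z) by rewrite addrACA addNr addr0.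
    exact: ler_normD.
  lra.
exists (sup E) => a Ga; split.
- by apply: ub_le_sup; [exists (`|(0 : V * R).1 + z| - 0); exact: Eub G0 | exists a].
- by apply: ge_sup; [exists (a.2 - `|a.1 - z|), a | exact: Eub].
Qed.

Lemma graph_extension_dominated G z c : linear_graph G -> norm_dominated G ->
  (forall a, G a -> a.2 - `|a.1 - z| <= c /\ c <= `|a.1 + z| - a.2) ->
  norm_dominated (graph_extension G z c).
Proof.
move=> [_ _ GZ _] Gb Hc _ [a [t [Ga ->]]] /=.
have rescale s w : 0 < s -> s * `|s^-1 *: a.1 + w| = `|a.1 + s *: w|.
  move=> s0; rewrite -[in RHS](scale1r a.1) -(mulfV (lt0r_neq0 s0)) -scalerA.
  by rewrite -scalerDr normrZ gtr0_norm.
have [t0|t0|->] := ltgtP t 0; last by rewrite scale0r mul0r !addr0; exact: Gb.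
- have s0 : 0 < - t by rewrite oppr_gt0.
  have := ler_wpM2l (ltW s0) (Hc _ (GZ (- t)^-1 _ Ga)).1.
  rewrite /= mulrBr rescale // mulrA mulfV ?gt_eqF // mul1r.
  by rewrite scalerN scaleNr opprK; lra.
- have := ler_wpM2l (ltW t0) (Hc _ (GZ t^-1 _ Ga)).2.
  by rewrite /= mulrBr rescale // mulrA mulfV ?gt_eqF // mul1r; lra.
Qed.

Lemma norming_graph_extend y0 G z : norming_graph y0 G ->
  (forall r, ~ G (z, r)) -> exists B, norming_graph y0 B /\ G `<` B.
Proof.
move=> [Glin Gb Gy] Gz; have [c Hc] := extension_constant _ z Glin Gb.
have Gz_ext : graph_extension G z c (z, c).
  by case: Glin => G0 _ _ _; exists (0, 0), 1; rewrite scale1r mul1r !add0r.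
exists (graph_extension G z c); split.
- split; [exact: linear_graph_extension | exact: graph_extension_dominated |].
  exact: graph_extension_sub.
- by split; [exact: graph_extension_sub | move=> /(_ _ Gz_ext); exact: Gz].
Qed.

Lemma norming_graph_bigcup y0 (F : set (set (V * R))) G0 :
  (forall G, F G -> G !=set0 -> norming_graph y0 G) -> total_on F subset ->
  F G0 -> G0 !=set0 -> norming_graph y0 (\bigcup_(G in F) G).
Proof.
move=> FP Ftot FG0 G0n.
have FPin G a : F G -> G a -> norming_graph y0 G.
  by move=> FG Ga; apply: FP FG _; exists a.
have common a b : (\bigcup_(G in F) G) a -> (\bigcup_(G in F) G) b ->
    exists G, [/\ F G, norming_graph y0 G, G a & G b].
  move=> [G1 F1 G1a] [G2 F2 G2b].
  have [G12|G21] := Ftot _ _ F1 F2.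
  - by exists G2; split => //; [exact: FPin G2b | exact: G12].
  - by exists G1; split => //; [exact: FPin G1a | exact: G21].
have [[G00 _ _ _] _ _] := FP _ FG0 G0n.
split; [split|..].
- by exists G0.
- move=> a b Ua Ub; have [G [FG [[_ GD _ _] _ _] Ga Gb]] := common _ _ Ua Ub.
  by exists G => //; exact: GD.
- move=> t a [G FG Ga]; have [[_ _ GZ _] _ _] := FPin _ _ FG Ga.
  by exists G => //; exact: GZ.
- move=> a b Ua Ub; have [G [_ [[_ _ _ Gf] _ _] Ga Gb]] := common _ _ Ua Ub.
  exact: Gf.
- by move=> a [G FG Ga]; have [_ Gb _] := FPin _ _ FG Ga; exact: Gb.
- by have [_ _ Gy] := FP _ FG0 G0n; exists G0.
Qed.

Lemma line_norming_graph y0 :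
  norming_graph y0 [set (t *: y0, t * `|y0|) | t in [set: R]].
Proof.
split; [split|..].
- by exists 0 => //; rewrite scale0r mul0r.
- move=> _ _ [t _ <-] [s _ <-]; exists (t + s) => //.
  by rewrite /= scalerDl mulrDl.
- by move=> u _ [t _ <-]; exists (u * t) => //; rewrite /= scalerA mulrA.
- move=> _ _ [t _ <-] [s _ <-] /= /eqP; rewrite -subr_eq0 -scalerBl.
  rewrite scaler_eq0 subr_eq0 => /orP[/eqP -> //|/eqP ->].
  by rewrite normr0 !mulr0.
- by move=> _ [t _ <-] /=; rewrite normrZ ler_wpM2r // ler_norm.
- by exists 1 => //; rewrite scale1r mul1r.
Qed.

Lemma exists_total_norming_graph y0 :
  exists G, norming_graph y0 G /\ forall z, exists r, G (z, r).
Proof.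
pose P := [set G : set (V * R) | G = set0 \/ norming_graph y0 G].
have [A [PA Amax]] : exists A, P A /\ forall B, A `<` B -> ~ P B.
  apply: Zorn_bigcup => F FP Ftot.
  have [[G0 [FG0 G0n]]|Fempty] := pselect (exists G, F G /\ G !=set0).
    right; apply: (@norming_graph_bigcup y0 F G0 _ Ftot FG0 G0n) => G FG [a Ga].
    by case: (FP _ FG) => // G_0; rewrite G_0 in Ga.
  left; apply/seteqP; split => // p [G FG Gp].
  by apply: Fempty; exists G; split => //; exists p.
have normA : norming_graph y0 A.
  case: PA => // A0; exfalso.
  apply: (Amax _ _ (or_intror (line_norming_graph y0))).
  rewrite A0; split => // /(_ (y0, `|y0|)); apply.
  by exists 1 => //; rewrite scale1r mul1r.
exists A; split => // z; apply: contrapT => Az.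
have [B [normB AB]] :=
  norming_graph_extend _ _ z normA (fun r Ar => Az (ex_intro _ r Ar)).
by apply: (Amax B AB); right.
Qed.

Lemma norming_functional y0 : exists f : {linear V -> R^o},
  [/\ continuous f, forall v, `|f v| <= `|v| & f y0 = `|y0|].
Proof.
have [G [[[_ GD GZ Gf] Gb Gy] Gtot]] := exists_total_norming_graph y0.
have [g Gg] := choice Gtot.
have glin : linear g.
  by move=> a u v; apply: (Gf _ _ (Gg _) (GD _ _ (GZ a _ (Gg u)) (Gg v))).
pose f : {linear V -> R^o} := HB.pack g (GRing.isLinear.Build _ _ _ _ g glin).
have f_le v : `|f v| <= `|v|.
  rewrite ler_norml (Gb _ (Gg v)) andbT.
  by have := Gb _ (GZ (-1) _ (Gg v)); rewrite /= scaleN1r normrN mulN1r; lra.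
exists f; split => //; last exact: (Gf _ _ (Gg y0) Gy).
apply/linear_bounded_continuous/bounded_funP => r; exists r => u ur.
exact: le_trans (f_le u) ur.
Qed.

End HahnBanach.

Section WeakSlices.
Context {R : realType} {V : normedModType R}.

Lemma unit_ball_dist (y z : V) : unit_ball y -> unit_ball z -> `|y - z| <= 2.
Proof. by rewrite /unit_ball /= => y1 z1; apply: le_trans (ler_normB _ _) _; lra. Qed.

Lemma unit_sphere_ball (x : V) : unit_sphere x -> unit_ball x.
Proof. by rewrite /unit_sphere /unit_ball /= => ->. Qed.

Lemma rel_weakly_open_ball_sub {W : set V} : rel_weakly_open_ball W -> W `<=` unit_ball.
Proof. by move=> [U [_ ->]] y []. Qed.

Lemma rel_weakly_open_ball_slice (W : set V) (f : {linear V -> R^o}) (c : R) :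
  continuous f -> rel_weakly_open_ball W ->
  rel_weakly_open_ball (W `&` [set z | c < f z]).
Proof.
move=> fc [U [U_open ->]]; exists (U `&` [set z | c < f z]).
split; last by rewrite setIAC.
move=> z [Uz cz]; have [n [g [d [gc [d0 g_sub]]]]] := U_open z Uz.
pose h i := if unlift ord_max i is Some j then g j else f.
exists n.+1, h, (Num.min d (f z - c)); split; last split.
- by move=> i; rewrite /h; case: (unlift ord_max i).
- by rewrite lt_min d0 subr_gt0.
- move=> y hy; split.
    apply: g_sub => j; have := hy (lift ord_max j).
    by rewrite /h liftK lt_min => /andP[].
  have := hy ord_max; rewrite /h unlift_none lt_min => /andP[_].
  by rewrite linearB /= ltr_norml => /andP[+ _]; lra.
Qed.

Lemma super_Delta_point_norming {x : V} : super_Delta_point x ->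
  forall W, rel_weakly_open_ball W -> W x -> forall d, 0 < d ->
  exists y (f : {linear V -> R^o}),
    [/\ W y, continuous f, forall v, `|f v| <= `|v| & 2 - d < f x - f y].
Proof.
move=> [x_sphere x_sup] W W_open Wx d d0.
have sup_dist : has_sup [set `|x - y| | y in W].
  split; first by exists `|x - x|, x.
  exists 2 => _ [y Wy <-]; apply: unit_ball_dist.
    exact: unit_sphere_ball.
  exact: rel_weakly_open_ball_sub W_open _ Wy.
have [_ [y Wy <-]] := sup_adherent d0 sup_dist; rewrite x_sup // => dxy.
have [f [fc f_le fxy]] := norming_functional (x - y).
by exists y, f; split => //; rewrite -linearB /= fxy.
Qed.

End WeakSlices.

Section SlicingSequence.
Context {R : realType} {V : normedModType R}.
Variables (x : V) (W : set V) (d : R) (F : set V -> V * {linear V -> R^o}).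
Hypotheses (x_sphere : unit_sphere x) (W_open : rel_weakly_open_ball W) (Wx : W x).
Hypothesis F_norming : forall W', rel_weakly_open_ball W' -> W' x ->
  [/\ W' (F W').1, continuous (F W').2, forall v, `|(F W').2 v| <= `|v|
    & 2 - d < (F W').2 x - (F W').2 (F W').1].

Fixpoint slice (k : nat) : set V :=
  if k is k.+1 then slice k `&` [set z | 1 - d < (F (slice k)).2 z] else W.

Lemma slice_open k : rel_weakly_open_ball (slice k) /\ slice k x.
Proof.
elim: k => [|k [Sk_open Skx]] //=.
have [Sk_y fc f_le fxy] := F_norming _ Sk_open Skx.
split; first exact: rel_weakly_open_ball_slice.
split => //=.
have := rel_weakly_open_ball_sub Sk_open _ Sk_y; rewrite /unit_ball /= => y1.
by have := f_le (F (slice k)).1; rewrite ler_norml => /andP[fy _]; lra.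
Qed.

Lemma slice_decr {i j} : (i <= j)%N -> slice j `<=` slice i.
Proof.
by move=> /subnK <-; elim: (j - i)%N => [|k IH] y //; rewrite addSn => -[/IH].
Qed.

Lemma slice_point_in k : W (F (slice k)).1.
Proof.
have [Sk_open Skx] := slice_open k; have [Sk_y _ _ _] := F_norming _ Sk_open Skx.
exact: slice_decr (leq0n k) _ Sk_y.
Qed.

Lemma slice_points_far i j : (i < j)%N ->
  2 - (d + d) < `|(F (slice j)).1 - (F (slice i)).1|.
Proof.
move=> ij.
have [Si_open Six] := slice_open i; have [_ _ f_le fxy] := F_norming _ Si_open Six.
have [Sj_open Sjx] := slice_open j; have [Sj_y _ _ _] := F_norming _ Sj_open Sjx.
have [_ /= fyj] := slice_decr ij _ Sj_y.
have fx : (F (slice i)).2 x <= 1.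
  by have := f_le x; rewrite x_sphere ler_norml => /andP[].
have := f_le ((F (slice j)).1 - (F (slice i)).1).
by rewrite linearB /= ler_norml => /andP[_]; lra.
Qed.

End SlicingSequence.

Lemma super_Delta_point_separated {R : realType} {V : normedModType R} {x : V} :
  super_Delta_point x -> forall W, rel_weakly_open_ball W -> W x ->
  forall eps, 0 < eps -> exists u : nat -> V,
    (forall n, W (u n)) /\ (forall i j, i <> j -> 2 - eps < `|u i - u j|).
Proof.
move=> xD W W_open Wx eps eps0; pose d := eps / 2.
have d0 : 0 < d by rewrite divr_gt0.
have /choice[F F_norming] : forall W' : set V, exists p : V * {linear V -> R^o},
    rel_weakly_open_ball W' -> W' x ->
    [/\ W' p.1, continuous p.2, forall v, `|p.2 v| <= `|v| & 2 - d < p.2 x - p.2 p.1].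
  (* on other sets the value of F is irrelevant *)
  have [y0 [f0 _]] := super_Delta_point_norming xD _ W_open Wx _ d0.
  move=> W'.
  have [[W'_open W'x]|W'_not] := pselect (rel_weakly_open_ball W' /\ W' x).
    have [y [f yf]] := super_Delta_point_norming xD _ W'_open W'x _ d0.
    by exists (y, f).
  by exists (y0, f0) => W'_open W'x; case: W'_not.
have x_sphere := xD.1.
exists (fun k => (F (slice W d F k)).1); split.
  exact: (slice_point_in _ _ _ _ W_open Wx F_norming).
have far := slice_points_far _ _ _ _ x_sphere W_open Wx F_norming.
rewrite [in 2 - eps](splitr eps) -/d.
move=> i j; case: (ltngtP i j) => [ij|ji|->] // _; last exact: far.
by rewrite distrC; exact: far.
Qed.

Section KuratowskiMeasure.
Context {R : realType} {V : normedModType R}.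

Lemma finitely_coverable_unit_ball (A : set V) :
  A `<=` unit_ball -> finitely_coverable A 2.
Proof.
move=> A_ball; exists 1%N, (fun _ => A); split; last by move=> y Ay; exists ord0.
by move=> _ y z Ay Az; apply: unit_ball_dist; apply: A_ball.
Qed.

Lemma separated_not_finitely_coverable (A : set V) (e : R) (u : nat -> V) :
  (forall n, A (u n)) -> (forall i j, i <> j -> e < `|u i - u j|) ->
  ~ finitely_coverable A e.
Proof.
move=> Au u_sep [n [S [S_diam A_cov]]].
have /choice[idx idxP] : forall k : 'I_n.+1, exists i, S i (u k).
  by move=> k; have [i _ Si] := A_cov _ (Au k); exists i.
have idx_inj : injective idx.
  move=> k l kl; apply/val_inj/eqP; apply: contraT => /eqP neq_kl.
  have := S_diam (idx k) (u k) (u l) (idxP k).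
  by rewrite kl => /(_ (idxP l)); rewrite leNgt u_sep.
by have := leq_card _ idx_inj; rewrite !card_ord ltnn.
Qed.

Lemma kuratowski_unit_ball_separated (A : set V) : A `<=` unit_ball ->
  (forall eps, 0 < eps -> exists u : nat -> V,
    (forall n, A (u n)) /\ (forall i j, i <> j -> 2 - eps < `|u i - u j|)) ->
  kuratowski A = 2.
Proof.
move=> A_ball A_sep; apply/eqP; rewrite eq_le; apply/andP; split.
  apply: ge_inf; last by split => //; exact: finitely_coverable_unit_ball.
  by exists 0 => e [e0 _]; exact: ltW.
apply: lb_le_inf; first by exists 2; split => //; exact: finitely_coverable_unit_ball.
move=> e [e0 A_cov]; rewrite leNgt; apply/negP => e_lt2.
have [u [Au u_sep]] : exists u : nat -> V,
    (forall n, A (u n)) /\ (forall i j, i <> j -> 2 - (2 - e) < `|u i - u j|).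
  by apply: A_sep; rewrite subr_gt0.
apply: separated_not_finitely_coverable Au _ A_cov.
by move=> i j /u_sep; rewrite subKr.
Qed.

End KuratowskiMeasure.

Theorem mainTheorem19 (R : realType) (X : completeNormedModType R) (x : X) :
  super_Delta_point x ->
  forall W : set X, rel_weakly_open_ball W -> W x ->
    kuratowski W = 2 /\
    (forall eps : R, 0 < eps ->
       exists u : nat -> X, (forall n, W (u n)) /\
         (forall i j : nat, i <> j -> 2 - eps < `|u i - u j|)).
Proof.
move=> xD W W_open Wx.
have W_sep := super_Delta_point_separated xD _ W_open Wx.
split => //; apply: kuratowski_unit_ball_separated W_sep.
exact: rel_weakly_open_ball_sub.
Qed.
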